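(* Let $\mu$ be a doubling measure on $\mathbb Z$ with $C^0_\mu=3$, and set $a_j=\mu(j)$. If there is $j_0\in\mathbb Z$ with $a_{j_0}<a_{j_0+1}$, then $a_j<a_{j+1}$ for every $j\le j_0$.
   Context: $\mathbb Z$ is the infinite path graph with edges $\{j,j+1\}$ and distance $|i-j|$. A measure is a weight function $\mu:\mathbb Z\to(0,\infty)$, $\mu(A)=\sum_{v\in A}\mu(v)$; $B(x,r)=\{y:|x-y|\le r\}$; $\mu$ is doubling if $\sup\{\mu(B(x,2k+1))/\mu(B(x,k)):x\in\mathbb Z,k\ge0\}<\infty$; $C^0_\mu=\sup_{x\in\mathbb Z}\mu(B(x,1))/\mu(x)$. *)

From Stdlib Require Export Reals ZArith.
Open Scope R_scope.

(* mu(B(x,r)) where B(x,r) = {y : |x - y| <= r} = {x-r, ..., x+r} (2r+1 points) *)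
Definition ball_measure (mu : Z -> R) (x : Z) (r : nat) : R :=
  sum_f_R0 (fun i => mu (x - Z.of_nat r + Z.of_nat i)%Z) (2 * r).

Definition positive_measure (mu : Z -> R) : Prop := forall v, 0 < mu v.

Definition doubling (mu : Z -> R) : Prop :=
  exists C : R, forall (x : Z) (k : nat),
    ball_measure mu x (2 * k + 1) / ball_measure mu x k <= C.

Definition C0_is (mu : Z -> R) (c : R) : Prop :=
  is_lub (fun t => exists x : Z, t = ball_measure mu x 1 / mu x) c.

(** The bound [C^0_mu <= 3] says [mu(x-1) + mu(x) + mu(x+1) <= 3 mu(x)] at every [x],
    i.e. the second difference of [j |-> mu j] is nonpositive: the sequence is concave.
    Hence its forward differences [mu(j+1) - mu(j)] do not decrease as [j] decreases, so
    they stay at least the positive difference at [j0] for every [j <= j0]. *)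
From Stdlib Require Import Reals ZArith Lra Lia.
Open Scope R_scope.

Lemma ball_measure_1 (mu : Z -> R) (x : Z) :
  ball_measure mu x 1 = mu (x - 1)%Z + mu x + mu (x + 1)%Z.
Proof.
  unfold ball_measure; simpl.
  replace (x - 1 + 0)%Z with (x - 1)%Z by ring.
  replace (x - 1 + 1)%Z with x by ring.
  replace (x - 1 + 2)%Z with (x + 1)%Z by ring.
  reflexivity.
Qed.

Lemma ball_measure_1_le_C0 (mu : Z -> R) (c : R) (x : Z) :
  positive_measure mu -> C0_is mu c -> ball_measure mu x 1 <= c * mu x.
Proof.
  intros Hpos [Hub _].
  pose proof (Hpos x) as Hx.
  pose proof (Hub _ (ex_intro _ x eq_refl)) as Hratio.
  apply Rmult_le_compat_r with (r := mu x) in Hratio; [|lra].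
  unfold Rdiv in Hratio.
  rewrite Rmult_assoc, Rinv_l, Rmult_1_r in Hratio by lra.
  exact Hratio.
Qed.

Lemma C0_3_concave (mu : Z -> R) (x : Z) :
  positive_measure mu -> C0_is mu 3 ->
  mu (x + 1)%Z - mu x <= mu x - mu (x - 1)%Z.
Proof.
  intros Hpos HC0.
  pose proof (ball_measure_1_le_C0 mu 3 x Hpos HC0) as Hball.
  rewrite ball_measure_1 in Hball.
  lra.
Qed.

Lemma concave_diff_antimono (f : Z -> R) :
  (forall x, f (x + 1)%Z - f x <= f x - f (x - 1)%Z) ->
  forall j k, (j <= k)%Z -> f (k + 1)%Z - f k <= f (j + 1)%Z - f j.
Proof.
  intros Hconc j.
  apply Z.le_ind.
  - intros ? ? ->; tauto.
  - lra.
  - intros k _ IH.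
    pose proof (Hconc (Z.succ k)) as Hstep.
    replace (Z.succ k - 1)%Z with k in Hstep by lia.
    replace (Z.succ k)%Z with (k + 1)%Z in * by lia.
    lra.
Qed.

Theorem lemma4p5 (mu : Z -> R) (Hpos : positive_measure mu)
  (Hdoub : doubling mu) (HC0 : C0_is mu 3)
  (j0 : Z) (Hj0 : mu j0 < mu (j0 + 1)%Z) :
  forall j : Z, (j <= j0)%Z -> mu j < mu (j + 1)%Z.
Proof.
  intros j Hj.
  pose proof (concave_diff_antimono mu (fun x => C0_3_concave mu x Hpos HC0) j j0 Hj).
  lra.
Qed.
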